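(* The only normal subgroups of $G=S(2^\infty)\ltimes \widetilde C(X;\mathbb{Z}_2)$ are $\{e\}$, $\widetilde C(X;\mathbb{Z}_2)$ and $G$.
   Context: For $n\ge1$ let $S(2^n)$ be the symmetric group of the finite set $\{0,1\}^n$, embedded in $S(2^{n+1})$ via $s\mapsto\tilde s$, $\tilde s(x,y)=(s(x),y)$ ($x\in\{0,1\}^n$, $y\in\{0,1\}$); $S(2^\infty)=\bigcup_n S(2^n)$. Let $X=\{0,1\}^{\mathbb N}$; $S(2^\infty)$ acts on $X$ by homeomorphisms via $s(x,y)=(s(x),y)$ for $s\in S(2^n)$, $x\in\{0,1\}^n$, $y\in\{0,1\}^{\mathbb N}$. $C(X;\mathbb Z_2)$ is the abelian group of continuous maps $X\to\mathbb Z_2$ under pointwise addition; its elements are $f_A=\mathbf 1_A$ for clopen $A\subseteq X$, with $f_Af_B=f_{A\triangle B}$. $S(2^\infty)$ acts by $g\cdot f_A=f_{g(A)}$. The constant functions $\{f_\emptyset,f_X\}$ form an invariant subgroup and $\widetilde C(X;\mathbb Z_2)$ is the quotient group; $\widetilde f_A$ denotes the class of $f_A$ (so $\widetilde f_A=\widetilde f_{X\setminus A}$). $G=S(2^\infty)\ltimes\widetilde C(X;\mathbb Z_2)$, with $g\widetilde f_Ag^{-1}=\widetilde f_{g(A)}$. *)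

From HB Require Import structures.
From mathcomp Require Import all_boot all_order all_algebra all_fingroup.
From mathcomp Require Import all_classical all_reals topology cantor.

Set Implicit Arguments.
Unset Strict Implicit.
Unset Printing Implicit Defensive.

Definition X : Type := cantor_space.

(* The action on X of s in S(2^n) = Sym({0,1}^n):
   s(x,y) = (s(x), y) for x in {0,1}^n, y in {0,1}^N. *)
Definition sact (n : nat) (s : {perm {ffun 'I_n -> bool}}) (x : X) : X :=
  fun i : nat =>
    let p : {ffun 'I_n -> bool} := [ffun j : 'I_n => x (nat_of_ord j)] in
    match (insub i : option 'I_n) with
    | Some j => s p j
    | None => x i
    end.

(* Candidate elements of G = S(2^oo) ⋉ C~(X;Z2), written s·f~ :
   gf = the permutation s (as a map on X), gb = its inverse, cf = a
   representative f of the class f~ in C(X;Z2)/{constants}. *)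
Record Gc := mkG { gf : X -> X; gb : X -> X; cf : X -> bool }.

Definition inG (a : Gc) : Prop :=
  (exists (n : nat) (s : {perm {ffun 'I_n -> bool}}),
      (forall x, gf a x = sact s x) /\ (forall x, gb a x = sact s^-1 x))
  /\ continuous (cf a).

Definition G_eq (a b : Gc) : Prop :=
  (forall x, gf a x = gf b x) /\
  ((forall x, cf a x = cf b x) \/ (forall x, cf a x = ~~ cf b x)).

(* group law: (s f)(t k) = (s t) (t^-1 f t) k, and t^-1 f_A t = f_{t^-1 A} = f_A o t *)
Definition gmul (a b : Gc) : Gc :=
  mkG (fun x => gf a (gf b x)) (fun x => gb b (gb a x))
      (fun x => addb (cf a (gf b x)) (cf b x)).

(* (s f)^-1 = f s^-1 = s^-1 (s f s^-1) = s^-1 f_{s(A)}, f_{s(A)} = f_A o s^-1 *)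
Definition ginv (a : Gc) : Gc :=
  mkG (gb a) (gf a) (fun x => cf a (gb a x)).

Definition gone : Gc := mkG id id (fun _ => false).

(* N is a normal subgroup of G (N is a predicate on representatives,
   required to be saturated w.r.t. equality in G). *)
Definition normal_subgroup (N : Gc -> Prop) : Prop :=
  (forall a, N a -> inG a) /\
  (forall a b, N a -> inG b -> G_eq a b -> N b) /\
  N gone /\
  (forall a b, N a -> N b -> N (gmul a b)) /\
  (forall a, N a -> N (ginv a)) /\
  (forall a b, N a -> inG b -> N (gmul (gmul b a) (ginv b))).

From HB Require Import structures.
From mathcomp Require Import all_boot all_order all_algebra all_fingroup.
From mathcomp Require Import all_classical all_reals topology cantor.
From mathcomp Require Import gseries alt.

Set Implicit Arguments.
Unset Strict Implicit.
Unset Printing Implicit Defensive.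

(* A normal subgroup N that contains a nonconstant function f_A contains all of
   C~(X;Z2): conjugating f_A by a transposition and adding yields the indicator
   of a pair of cylinders of some length K, 2-transitivity of S(2^K) gives all
   such pairs, a cylinder of length K-1 is such a pair, and every clopen set is
   a finite union of cylinders of one length (compactness).  If N contains an
   element moving a point, its commutator with the indicator of a small
   cylinder is a nonconstant function, so N contains C~(X;Z2) and hence a
   nontrivial permutation s in S(2^n).  Lifted to S(2^M) for large M, s and
   every permutation of a lower level become even, and N meets S(2^M) in a
   normal subgroup; simplicity of Alt(2^M) then puts all of S(2^oo) in N. *)

Definition agree n (x y : X) := forall i, (i < n)%N -> x i = y i.

Definition prefix_determined n (c : X -> bool) :=
  forall x y, agree n x y -> c x = c y.

Lemma prefix_determinedW m n c :
  (m <= n)%N -> prefix_determined m c -> prefix_determined n c.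
Proof. by move=> mn cm x y xy; apply: cm => i /leq_trans/(_ mn)/xy. Qed.

Local Open Scope classical_set_scope.

Lemma agree_nbhs (x : X) n : nbhs x (agree n x).
Proof.
elim: n => [|n IH]; first by apply: filterS filterT => y _ i.
have xn : nbhs x (@proj nat (fun _ => bool) n @^-1` [set x n]).
  exact: (@proj_continuous nat (fun _ => bool) n x).
apply: filterS (filterI IH xn) => y [xy yn] i.
by rewrite ltnS leq_eqVlt => /predU1P[->|/xy//]; rewrite -yn.
Qed.

Lemma nbhs_agree (x : X) (A : set X) : nbhs x A -> exists n, agree n x `<=` A.
Proof.
pose F : set_system X := fun A => exists n, agree n x `<=` A.
have F_filter : Filter F.
  constructor; first by exists 0%N.
  - move=> B C [m xB] [n xC]; exists (maxn m n) => y xy; split.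
      by apply: xB => i im; apply: xy; exact: leq_trans im (leq_maxl m n).
    by apply: xC => i im; apply: xy; exact: leq_trans im (leq_maxr m n).
  - by move=> B C BC [n xB]; exists n => y /xB/BC.
have : F --> (x : cantor_space).
  apply/(@cvg_sup _ _ _ _ _ F_filter) => i B [U [[V _ <-] Ux] UB].
  by exists i.+1 => y xy; apply: UB; rewrite /= -xy.
by move/(_ A).
Qed.

Lemma prefix_determined_continuous n c :
  prefix_determined n c -> continuous c.
Proof.
move=> cn x A /= /nbhs_singleton Acx.
by apply: filterS (agree_nbhs x n) => y /cn; rewrite /preimage /= => <-.
Qed.

(* Compactness of the Cantor space turns the local constancy of [c] into a uniform one. *)
Lemma continuous_prefix_determined (c : X -> bool) :
  continuous c -> exists n, prefix_determined n c.
Proof.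
move=> c_cont.
pose U n : set cantor_space := [set x | forall y, agree n x y -> c y = c x].
have U_open n : open (U n).
  rewrite openE => x Ux; apply: filterS (agree_nbhs x n) => z xz y zy.
  by rewrite (Ux y) ?(Ux z) // => i ilt; rewrite xz ?zy.
have U_cover : [set: cantor_space] `<=` cover [set: nat] U.
  have cx_nbhs (x : X) : nbhs (c x) [set c x] by [].
  move=> x _; have [n xc] := nbhs_agree (c_cont x _ (cx_nbhs x)).
  by exists n => // y /xc.
have := cantor_space_compact; rewrite compact_cover.
case/(_ nat [set: nat] U (fun n _ => U_open n) U_cover) => D _ DU.
exists (\max_(i <- finmap.enum_fset D) i)%N => x y xy.
have [n Dn Uny] := DU y I.
by apply: Uny => i ilt; rewrite xy // (leq_trans ilt) // leq_bigmax_seq.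
Qed.
Local Close Scope classical_set_scope.
Local Open Scope group_scope.

Local Notation word n := {ffun 'I_n -> bool}.

Definition prefix n (x : X) : word n := [ffun j : 'I_n => x j].

Definition pad n (w : word n) : X :=
  fun i => if (insub i : option 'I_n) is Some j then w j else false.

Definition flip k (x : X) : X := fun i => if i == k then ~~ x i else x i.

Lemma prefixE n x (j : 'I_n) : prefix n x j = x j.
Proof. by rewrite ffunE. Qed.

Lemma prefix_agree n x y : prefix n x = prefix n y <-> agree n x y.
Proof.
split=> [xy i ilt|xy]; last by apply/ffunP => j; rewrite !prefixE xy.
by have := congr1 (fun w : word n => w (Ordinal ilt)) xy; rewrite !prefixE.
Qed.

Lemma prefixS_eq n x y :
  (prefix n.+1 x == prefix n.+1 y) = (prefix n x == prefix n y) && (x n == y n).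
Proof.
apply/eqP/andP => [/prefix_agree xy|[/eqP/prefix_agree xy /eqP xyn]].
  by split; apply/eqP; [apply/prefix_agree => i /ltnW/xy | apply: xy].
by apply/prefix_agree => i; rewrite ltnS leq_eqVlt => /predU1P[->|/xy].
Qed.

Lemma pad_lt n (w : word n) (j : 'I_n) : pad w j = w j.
Proof. by rewrite /pad valK. Qed.

Lemma pad_ge n (w : word n) i : (n <= i)%N -> pad w i = false.
Proof. by move=> ni; rewrite /pad insubF // ltnNge ni. Qed.

Lemma prefix_pad n (w : word n) : prefix n (pad w) = w.
Proof. by apply/ffunP => j; rewrite prefixE pad_lt. Qed.

Lemma prefix_determined_pad n c x :
  prefix_determined n c -> c x = c (pad (prefix n x)).
Proof. by move=> cn; apply: cn => i ilt; rewrite (pad_lt _ (Ordinal ilt)) prefixE. Qed.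

Lemma sact_ord n (s : {perm word n}) x (j : 'I_n) : sact s x j = s (prefix n x) j.
Proof. by rewrite /sact valK. Qed.

Lemma sact_lt n (s : {perm word n}) x i (ilt : (i < n)%N) :
  sact s x i = s (prefix n x) (Ordinal ilt).
Proof. exact: (sact_ord s x (Ordinal ilt)). Qed.

Lemma sact_ge n (s : {perm word n}) x i : (n <= i)%N -> sact s x i = x i.
Proof. by move=> ni; rewrite /sact insubF // ltnNge ni. Qed.

Lemma prefix_sact n (s : {perm word n}) x : prefix n (sact s x) = s (prefix n x).
Proof. by apply/ffunP => j; rewrite prefixE sact_ord. Qed.

Lemma sact_eq n (s : {perm word n}) x y :
  (forall i, (n <= i)%N -> x i = y i) -> s (prefix n x) = prefix n y -> sact s x = y.
Proof.
move=> xy_ge xy_lt; apply: boolp.funext => i; case: (ltnP i n) => [ilt|ige].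
  by rewrite (sact_lt _ _ ilt) xy_lt prefixE.
by rewrite sact_ge // xy_ge.
Qed.

Lemma sactM n (s t : {perm word n}) x : sact (s * t) x = sact t (sact s x).
Proof.
apply: sact_eq => [i ige|]; first by rewrite !sact_ge.
by rewrite !prefix_sact permM.
Qed.

Lemma sact1 n x : sact (1 : {perm word n}) x = x.
Proof. by apply: sact_eq; rewrite ?perm1. Qed.

Lemma sactK n (s : {perm word n}) : cancel (sact s) (sact s^-1).
Proof. by move=> x; rewrite -sactM mulgV sact1. Qed.

Lemma sactKV n (s : {perm word n}) : cancel (sact s^-1) (sact s).
Proof. by move=> x; rewrite -sactM mulVg sact1. Qed.

Lemma sact_inj n (s t : {perm word n}) : sact s =1 sact t -> s = t.
Proof. by move=> st; apply/permP => w; rewrite -(prefix_pad w) -!prefix_sact st. Qed.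

Lemma sact_agree n m (s : {perm word n}) x y : (n <= m)%N ->
  agree m x y -> agree m (sact s x) (sact s y).
Proof.
move=> nm xy i ilt; case: (ltnP i n) => [iltn|ige]; last by rewrite !sact_ge // xy.
have /prefix_agree xy_n : agree n x y by move=> j /leq_trans/(_ nm)/xy.
by rewrite !(sact_lt _ _ iltn) xy_n.
Qed.

Lemma exists_sact n (F : X -> X) : injective F ->
  (forall x i, (n <= i)%N -> F x i = x i) ->
  (forall x y, agree n x y -> agree n (F x) (F y)) ->
  exists s : {perm word n}, forall x, sact s x = F x.
Proof.
move=> F_inj F_ge F_agree.
pose f (w : word n) : word n := prefix n (F (pad w)).
have f_inj : injective f.
  move=> w1 w2 /prefix_agree F12; rewrite -(prefix_pad w1) -(prefix_pad w2).
  congr (prefix n _); apply: F_inj; apply: boolp.funext => i.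
  by case: (ltnP i n) => [/F12//|ige]; rewrite !F_ge // !pad_ge.
exists (perm f_inj) => x; apply: sact_eq => [i ige|]; first by rewrite F_ge.
rewrite permE; apply/prefix_agree/F_agree/prefix_agree.
by rewrite prefix_pad.
Qed.

Lemma exists_sact_lift n m (s : {perm word n}) : (n <= m)%N ->
  exists t : {perm word m}, forall x, sact t x = sact s x.
Proof.
move=> nm; apply: exists_sact; first exact: can_inj (sactK s).
  by move=> x i mi; rewrite sact_ge // (leq_trans nm mi).
by move=> x y; apply: sact_agree.
Qed.

Lemma flipK k : involutive (flip k).
Proof. by move=> x; apply: boolp.funext => i; rewrite /flip; case: eqP; rewrite ?negbK. Qed.

Lemma agree_flip k x : agree k (flip k x) x.
Proof. by move=> i ilt; rewrite /flip ltn_eqF. Qed.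

Lemma sact_flip k (u : {perm word k}) x : sact u (flip k x) = flip k (sact u x).
Proof.
apply: boolp.funext => i; rewrite /flip; case: (ltnP i k) => [ilt|ige].
  rewrite !(sact_lt _ _ ilt) ltn_eqF //.
  by congr (u _ _); apply/prefix_agree/agree_flip.
by rewrite !sact_ge //; case: eqP => // ->; rewrite sact_ge.
Qed.

(* The lift v of u to one more coordinate is u0 * u0^sg, where u0 acts as u on
   the half {x_k = 0} and sg swaps the two halves; hence v is even. *)
Lemma sact_lift1_even k (u : {perm word k}) (v : {perm word k.+1}) :
  (forall x, sact v x = sact u x) -> ~~ odd_perm v.
Proof.
move=> vu.
pose F x := if x k then x else sact u x.
have [u0 u0F] : exists u0 : {perm word k.+1}, forall x, sact u0 x = F x.
  apply: exists_sact => [|x i ki|x y xy].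
  - apply: (@can_inj _ _ _ (fun x => if x k then x else sact u^-1 x)) => x.
    by rewrite /F; case xk: (x k); rewrite ?xk // sact_ge // xk sactK.
  - by rewrite /F; case: (x k) => //; rewrite sact_ge // ltnW.
  - rewrite /F (xy k (ltnSn k)); case: (y k) => //; exact: sact_agree.
have [sg sg_flip] : exists sg : {perm word k.+1}, forall x, sact sg x = flip k x.
  apply: exists_sact => [|x i ki|x y xy i ilt]; first exact: can_inj (flipK k).
    by rewrite /flip gtn_eqF.
  by rewrite /flip xy.
have sgV_flip x : sact sg^-1 x = flip k x by rewrite -{1}(flipK k x) -sg_flip sactK.
have -> : v = u0 * u0 ^ sg.
  apply: sact_inj => x; rewrite vu /conjg !sactM sgV_flip !u0F sg_flip /F /flip eqxx.
  case xk: (x k) => /=; first by rewrite xk /= -/(flip k _) sact_flip flipK.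
  by rewrite sact_ge // xk /= -/(flip k _) flipK.
by rewrite odd_permM odd_permJ addbb.
Qed.

Lemma sact_lift_even n m (s : {perm word n}) (t : {perm word m}) : (n < m)%N ->
  (forall x, sact t x = sact s x) -> ~~ odd_perm t.
Proof.
case: m t => // m t nm ts.
have [u us] := exists_sact_lift s nm.
by apply: (sact_lift1_even (u := u)) => x; rewrite ts us.
Qed.

Definition perm_elt n (u : {perm word n}) : Gc :=
  mkG (sact u) (sact u^-1) (fun _ => false).

Definition fun_elt (c : X -> bool) : Gc := mkG id id c.

Lemma inG_perm_elt n (u : {perm word n}) : inG (perm_elt u).
Proof. by split; [exists n, u | exact: cst_continuous]. Qed.

Lemma inG_fun_elt c : continuous c -> inG (fun_elt c).
Proof. by split=> //; exists 0%N, 1; split=> x /=; rewrite ?invg1 sact1. Qed.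

Definition prefix_mem n (S : {set word n}) (x : X) : bool := prefix n x \in S.

Lemma prefix_mem_determined n (S : {set word n}) : prefix_determined n (prefix_mem S).
Proof. by move=> x y /prefix_agree xy; rewrite /prefix_mem xy. Qed.

Section NormalSubgroup.

Variable N : Gc -> Prop.
Hypothesis N_normal : normal_subgroup N.

Lemma N_inG a : N a -> inG a.
Proof. by case: N_normal => + _; apply. Qed.

Lemma N_eq a b : N a -> inG b -> G_eq a b -> N b.
Proof. by case: N_normal => _ [+ _]; apply. Qed.

Lemma N_one : N gone.
Proof. by case: N_normal => _ [_ []]. Qed.

Lemma N_mul a b : N a -> N b -> N (gmul a b).
Proof. by case: N_normal => _ [_ [_ [+ _]]]; apply. Qed.

Lemma N_inv a : N a -> N (ginv a).
Proof. by case: N_normal => _ [_ [_ [_ [+ _]]]]; apply. Qed.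

Lemma N_conj a b : N a -> inG b -> N (gmul (gmul b a) (ginv b)).
Proof. by case: N_normal => _ [_ [_ [_ [_ +]]]]; apply. Qed.

Definition fun_in c := N (fun_elt c).

Definition perm_in n (u : {perm word n}) := N (perm_elt u).

Lemma fun_inP a c : N a -> (forall x, gf a x = x) -> (forall x, cf a x = c x) -> fun_in c.
Proof.
move=> Na a_id ac; have c_cont : continuous c.
  by rewrite -(boolp.funext ac); case: (N_inG Na).
by apply: N_eq Na (inG_fun_elt c_cont) _; split=> //; left.
Qed.

Lemma eq_fun_in c c' : c =1 c' -> fun_in c -> fun_in c'.
Proof. by move=> /boolp.funext ->. Qed.

Lemma fun_in0 : fun_in (fun _ => false).
Proof. exact: N_one. Qed.

Lemma fun_inD c1 c2 : fun_in c1 -> fun_in c2 -> fun_in (fun x => c1 x (+) c2 x).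
Proof. by move=> c1N c2N; apply: fun_inP (N_mul c1N c2N) _ _. Qed.

Lemma fun_inJ n (r : {perm word n}) c : fun_in c -> fun_in (fun x => c (sact r^-1 x)).
Proof.
move=> cN; apply: fun_inP (N_conj cN (inG_perm_elt r)) _ _ => x /=.
  by rewrite sactKV.
by rewrite addbF.
Qed.

Lemma perm_inP a n (u : {perm word n}) :
  N a -> (forall x, gf a x = sact u x) -> (forall x, cf a x = false) -> perm_in u.
Proof. by move=> Na au a0; apply: N_eq Na (inG_perm_elt u) _; split=> //; left. Qed.

Lemma perm_in_sact m n (s : {perm word m}) (t : {perm word n}) :
  (forall x, sact s x = sact t x) -> perm_in s -> perm_in t.
Proof. by move=> st sN; apply: perm_inP sN _ _. Qed.

Lemma perm_in1 n : perm_in (1 : {perm word n}).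
Proof. by apply: perm_inP N_one _ _ => x //=; rewrite sact1. Qed.

Lemma perm_inM n (u v : {perm word n}) : perm_in u -> perm_in v -> perm_in (u * v).
Proof. by move=> uN vN; apply: perm_inP (N_mul vN uN) _ _ => x /=; rewrite ?sactM. Qed.

Lemma perm_inJ n (u w : {perm word n}) : perm_in u -> perm_in (u ^ w).
Proof.
move=> uN; apply: perm_inP (N_conj uN (inG_perm_elt w)) _ _ => x //=.
by rewrite /conjg !sactM.
Qed.

Lemma fun_in_some_pair K c x1 x2 : prefix_determined K c -> fun_in c ->
  c x1 = true -> c x2 = false ->
  exists u v : word K, u != v /\ fun_in (prefix_mem [set u; v]).
Proof.
move=> cK cN cx1 cx2; set u := prefix K x1; set v := prefix K x2.
have cE x : c x = c (pad (prefix K x)) by exact: prefix_determined_pad.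
have cu : c (pad u) = true by rewrite -cE.
have cv : c (pad v) = false by rewrite -cE.
have uv : u != v by apply: contraPneq cu => ->; rewrite cv.
exists u, v; split=> //; apply: eq_fun_in (fun_inD cN (fun_inJ (tperm u v) cN)) => x.
rewrite /prefix_mem cE (cE (sact _ x)) prefix_sact tpermV !inE.
case: tpermP => [->|->|xu xv]; rewrite ?eqxx ?orbT ?cu ?cv // addbb.
by move/eqP/negPf: xu => ->; move/eqP/negPf: xv => ->.
Qed.

(* Conjugate by a permutation mapping u, v to u', v' (S(2^K) is 2-transitive). *)
Lemma fun_in_pairs K (u v : word K) : u != v -> fun_in (prefix_mem [set u; v]) ->
  forall u' v' : word K, u' != v' -> fun_in (prefix_mem [set u'; v']).
Proof.
move=> uv uvN u' v' uv'.
pose r := tperm u u' * tperm (tperm u u' v) v'.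
have ru : r u = u'.
  rewrite permM tpermL tpermD //; last by rewrite eq_sym.
  by apply: contra uv => /eqP/(canRL (tpermK u u')); rewrite tpermR => ->.
have rv : r v = v' by rewrite permM tpermL.
apply: eq_fun_in (fun_inJ r uvN) => x.
rewrite /prefix_mem prefix_sact -{2}(permKV r (prefix K x)) !inE.
by rewrite -ru -rv !(inj_eq (@perm_inj _ r)).
Qed.

(* At level M+1 the cylinder of w is the pair {w0, w1}. *)
Lemma fun_in_singletons M :
  (forall u v : word M.+1, u != v -> fun_in (prefix_mem [set u; v])) ->
  forall w : word M, fun_in (prefix_mem [set w]).
Proof.
move=> pairsN w; set y := pad w.
have yM : y M = false by rewrite /y pad_ge.
have flip_yM : flip M y M = true by rewrite /flip eqxx yM.
have prefix_flip : prefix M (flip M y) = w.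
  by rewrite -(prefix_pad w); apply/prefix_agree/agree_flip.
have y_flip : prefix M.+1 y != prefix M.+1 (flip M y).
  by rewrite prefixS_eq yM flip_yM andbF.
apply: eq_fun_in (pairsN _ _ y_flip) => x.
rewrite /prefix_mem !inE !prefixS_eq prefix_pad prefix_flip yM flip_yM.
by case: (x M); rewrite ?andbT ?andbF ?orbF.
Qed.

Lemma fun_in_prefix_mem M :
  (forall w : word M, fun_in (prefix_mem [set w])) ->
  forall S : {set word M}, fun_in (prefix_mem S).
Proof.
move=> singleN S; move: {2}#|S| (erefl #|S|) => k; elim: k S => [|k IH] S cardS.
  move/eqP: cardS; rewrite cards_eq0 => /eqP ->.
  by apply: eq_fun_in fun_in0 => x; rewrite /prefix_mem inE.
have [w Sw] : exists w, w \in S by apply/card_gt0P; rewrite cardS.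
have cardSw : #|S :\ w| = k by move: cardS; rewrite (cardsD1 w) Sw add1n => -[].
apply: eq_fun_in (fun_inD (IH _ cardSw) (singleN w)) => x.
by rewrite /prefix_mem !inE; case: eqVneq => [->|]; rewrite ?Sw //= addbF.
Qed.

Lemma fun_in_continuous c0 x1 x2 : fun_in c0 -> c0 x1 = true -> c0 x2 = false ->
  forall c, continuous c -> fun_in c.
Proof.
move=> c0N c0x1 c0x2 c /continuous_prefix_determined[m cm].
have [n c0n] : exists n, prefix_determined n c0.
  by apply: continuous_prefix_determined; case: (N_inG c0N).
pose M := maxn n m.
have c0M : prefix_determined M.+1 c0.
  exact: prefix_determinedW (leq_trans (leq_maxl n m) (leqnSn M)) c0n.
have [u [v [uv uvN]]] := fun_in_some_pair c0M c0N c0x1 c0x2.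
have setsN := fun_in_prefix_mem (fun_in_singletons (fun_in_pairs uv uvN)).
apply: eq_fun_in (setsN [set w | c (pad w)]) => x.
by rewrite /prefix_mem inE -(prefix_determined_pad _ (prefix_determinedW (leq_maxr n m) cm)).
Qed.

(* The commutator of a with the indicator k of a small cylinder around y0 = a x0
   is k + k o a^-1, which separates y0 from y0 with its n-th coordinate flipped. *)
Lemma moving_fun_in a x0 : N a -> gf a x0 <> x0 -> forall c, continuous c -> fun_in c.
Proof.
move=> Na ax0; have [[n [s [aE aVE]]] _] := N_inG Na.
pose y0 := sact s x0.
pose k := prefix_mem [set prefix n.+1 y0].
have k_agree x : k x -> agree n.+1 x y0.
  by rewrite /k /prefix_mem inE => /eqP/prefix_agree.
have k_x0 x : agree n x x0 -> k x = false.
  move=> xx0; apply/negP => /k_agree xy0; apply: ax0; rewrite aE.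
  apply: boolp.funext => i; case: (ltnP i n) => [ilt|/sact_ge //].
  by rewrite -xx0 // xy0 // ltnW.
have kN : fun_in (fun x => k x (+) k (sact s^-1 x)).
  have k_cont : continuous k by exact/prefix_determined_continuous/prefix_mem_determined.
  apply: fun_inP (N_mul (N_conj Na (inG_fun_elt k_cont)) (N_inv Na)) _ _ => x /=.
    by rewrite aE aVE sactKV.
  by rewrite aE aVE sactKV; case: (k x); case: (k _); case: (cf a _).
apply: (fun_in_continuous (x1 := y0) (x2 := flip n y0) kN).
  by rewrite /y0 sactK (k_x0 x0) // addbF /k /prefix_mem inE eqxx.
have -> : k (flip n y0) = false.
  by apply/negP => /k_agree/(_ n (ltnSn n)); rewrite /flip eqxx; case: (y0 n).
by rewrite sact_flip /y0 sactK k_x0 //; exact: agree_flip.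
Qed.

(* N meets S(2^M) in a normal subgroup, and Alt(2^M) is simple for M >= 3. *)
Lemma perm_in_Alt M (s : {perm word M}) : (2 < M)%N ->
  s != 1 -> ~~ odd_perm s -> perm_in s ->
  forall t : {perm word M}, ~~ odd_perm t -> perm_in t.
Proof.
move=> M_gt2 s1 s_even sN t t_even.
pose H := [set u : {perm word M} | `[< perm_in u >]].
have inH u : (u \in H) = `[< perm_in u >] by rewrite inE.
have H_group : group_set H.
  apply/group_setP; split=> [|u v]; rewrite !inH; first exact/asboolP/perm_in1.
  by move=> /asboolP uN /asboolP vN; apply/asboolP; exact: perm_inM.
have H_normal : Group H_group <| [set: {perm word M}].
  apply/normalP; split=> [|w _]; first exact: finset.subsetT.
  apply/eqP; rewrite eqEcard cardJg leqnn andbT.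
  apply/fintype.subsetP => u; rewrite mem_conjg !inH => /asboolP uN; apply/asboolP.
  by rewrite -(conjgKV w u); exact: perm_inJ.
have AltH_normal := normalGI (finset.subsetT 'Alt_(word M)) H_normal.
have card_word : (4 < #|word M|)%N.
  rewrite card_ffun card_bool card_ord (@leq_trans (2 ^ 3)) //.
  by rewrite leq_exp2l.
have sAltH : s \in ('Alt_(word M) :&: Group H_group)%G.
  by rewrite /= inE Alt_even s_even inH; apply/asboolP.
case/simpleP: (simple_Alt5 card_word) => _ /(_ _ AltH_normal) [AltH1|AltH].
  by move: sAltH; rewrite AltH1 => /set1gP s1'; rewrite s1' eqxx in s1.
have : t \in ('Alt_(word M) :&: Group H_group)%G by rewrite AltH Alt_even.
by rewrite /= inE inH => /andP[_ /asboolP].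
Qed.

(* Lifted to a common higher level, both s and t become even. *)
Lemma perm_in_all n (s : {perm word n}) : s != 1 -> perm_in s ->
  forall p (t : {perm word p}), perm_in t.
Proof.
move=> s1 sN p t; pose M := (maxn n p).+3.
have nM : (n < M)%N by rewrite /M !ltnS leqW // leqW // leq_maxl.
have pM : (p < M)%N by rewrite /M !ltnS leqW // leqW // leq_maxr.
have [s' s'E] := exists_sact_lift s (ltnW nM).
have [t' t'E] := exists_sact_lift t (ltnW pM).
apply: (perm_in_sact t'E).
apply: (perm_in_Alt (s := s')) (sact_lift_even pM t'E) => //.
- apply: contra_neq s1 => s'1; apply: sact_inj => x.
  by rewrite -s'E s'1 !sact1.
- exact: sact_lift_even nM s'E.
- by apply: perm_in_sact sN => x; rewrite s'E.
Qed.

Lemma N_full a x0 : N a -> gf a x0 <> x0 -> forall b, inG b -> N b.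
Proof.
move=> Na ax0; have funN := moving_fun_in Na ax0.
have [[n [s [aE _]]] a_cont] := N_inG Na.
have sN : perm_in s.
  by apply: perm_inP (N_mul Na (funN _ a_cont)) _ _ => x /=; rewrite ?aE ?addbb.
have s1 : s != 1 by apply/eqP => s1; apply: ax0; rewrite aE s1 sact1.
move=> b Gb; have [[p [t [bE _]]] b_cont] := Gb.
apply: N_eq (N_mul (perm_in_all s1 sN t) (funN _ b_cont)) Gb _.
by split=> [x|]; [rewrite bE | left].
Qed.

Lemma N_functions a : N a -> (forall x, gf a x = x) -> ~ G_eq a gone ->
  forall b, inG b -> (forall x, gf b x = x) -> N b.
Proof.
move=> Na a_id a1.
have [x1 ax1] : exists x1, cf a x1 = true.
  apply: contrapT => no_x1; apply: a1; split=> //; left => x.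
  by case ax: (cf a x) => //; case: no_x1; exists x.
have [x2 ax2] : exists x2, cf a x2 = false.
  apply: contrapT => no_x2; apply: a1; split=> //; right => x.
  by case ax: (cf a x) => //; case: no_x2; exists x.
have funN := fun_in_continuous (fun_inP Na a_id (fun _ => erefl)) ax1 ax2.
move=> b Gb b_id; have [_ b_cont] := Gb.
by apply: N_eq (funN _ b_cont) Gb _; split=> //; left.
Qed.

End NormalSubgroup.

Local Close Scope group_scope.

Theorem proposition3p1 (N : Gc -> Prop) :
  normal_subgroup N ->
  (forall a, N a <-> inG a /\ G_eq a gone) \/
  (forall a, N a <-> inG a /\ (forall x, gf a x = x)) \/
  (forall a, N a <-> inG a).
Proof.
move=> N_normal.
have [[a [Na [x0 ax0]]]|no_moving] := pselect (exists a, N a /\ exists x, gf a x <> x).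
  have N_all := N_full N_normal Na ax0.
  by right; right=> b; split; [exact: N_inG | exact: N_all].
have N_id a : N a -> forall x, gf a x = x.
  by move=> Na x; apply: contrapT => ax; apply: no_moving; exists a; split=> //; exists x.
have [[a [Na a1]]|all_trivial] := pselect (exists a, N a /\ ~ G_eq a gone).
  right; left=> b; split=> [Nb|[Gb b_id]]; first by split; [exact: N_inG Nb | exact: N_id Nb].
  by apply: (N_functions N_normal Na (N_id a Na) a1).
left=> b; split=> [Nb|[Gb [b_id b_cf]]].
  by split; [exact: N_inG Nb | apply: contrapT => b1; apply: all_trivial; exists b].
apply: (N_eq N_normal (N_one N_normal) Gb); split=> [x|]; first by rewrite b_id.
by case: b_cf => cf_eq; [left|right] => x; rewrite cf_eq.
Qed.
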